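(* Let $m\ge2$ and let $k\ge2$ divide $m$. Consider $n=m$ voters and alternatives $a_1,\dots,a_m$, where voter $i$ ranks $a_i$ first. For every partition of the voters into $k$ districts of $m/k$ voters each, there exist a unit-sum valuation profile consistent with these first choices and a resolution of ties such that, in the resulting district-based election with Plurality Voting in each district and unit weights, the election winner $x$ satisfies $\max_j\mathrm{SW}(j\mid\mathbf v)/\mathrm{SW}(x\mid\mathbf v)\ge1+\frac{m^2}{2}$. In particular, there are instances in which every symmetric $k$-districting yields distributed distortion $\Omega(m^2)$ for Plurality Voting.
   Context: Valuations satisfy $v_{ij}\ge0$, $\sum_j v_{ij}=1$; a voter's ranking is induced by her valuations with ties among equal values broken arbitrarily, and ''consistent with first choices'' means voter $i$'s induced ranking (under some tie-breaking) has $a_i$ first. $\mathrm{SW}(j\mid\mathbf v)=\sum_i v_{ij}$. Plurality Voting in a district elects an alternative ranked first by the most voters of the district (ties arbitrary); the election winner is an alternative that is the local winner in the maximum number of districts (ties arbitrary). *)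

From HB Require Import structures.
From mathcomp Require Import all_boot all_order all_algebra.
Set Implicit Arguments. Unset Strict Implicit. Unset Printing Implicit Defensive.
Import Order.TTheory GRing.Theory Num.Theory.
Local Open Scope ring_scope.

(* n voters ('I_n), m alternatives ('I_m), k districts ('I_k).
   A valuation profile is v : 'I_n -> 'I_m -> R, v i j = v_{ij}. *)

Definition unit_sum_profile (R : realFieldType) (n m : nat)
  (v : 'I_n -> 'I_m -> R) : Prop :=
  (forall i j, 0 <= v i j) /\ (forall i, \sum_(j < m) v i j = 1).

(* voter i's first choice is top i, and her valuations are consistent with it:
   top i has maximal value, so some tie-breaking of the induced ranking puts it first *)
Definition consistent_first (R : realFieldType) (n m : nat)
  (v : 'I_n -> 'I_m -> R) (top : 'I_n -> 'I_m) : Prop :=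
  forall i j, v i j <= v i (top i).

Definition SW (R : realFieldType) (n m : nat) (v : 'I_n -> 'I_m -> R)
  (j : 'I_m) : R := \sum_(i < n) v i j.

Definition plurality_score (n m k : nat) (d : 'I_n -> 'I_k)
  (top : 'I_n -> 'I_m) (t : 'I_k) (j : 'I_m) : nat :=
  #|[set i : 'I_n | (d i == t) && (top i == j)]|.

Definition plurality_local_winner (n m k : nat) (d : 'I_n -> 'I_k)
  (top : 'I_n -> 'I_m) (t : 'I_k) (j : 'I_m) : Prop :=
  forall j' : 'I_m, (plurality_score d top t j' <= plurality_score d top t j)%N.

(* number of districts won by x, given the local winners w (unit weights) *)
Definition districts_won (m k : nat) (w : 'I_k -> 'I_m) (x : 'I_m) : nat :=
  #|[set t : 'I_k | w t == x]|.

Definition election_winner (m k : nat) (w : 'I_k -> 'I_m) (x : 'I_m) : Prop :=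
  forall y : 'I_m, (districts_won w y <= districts_won w x)%N.

Definition symmetric_districting (n k : nat) (d : 'I_n -> 'I_k) : Prop :=
  forall t : 'I_k, #|[set i : 'I_n | d i == t]| = (n %/ k)%N.

From HB Require Import structures.
From mathcomp Require Import all_boot all_order all_algebra.
From mathcomp Require Import ring lra.
Set Implicit Arguments. Unset Strict Implicit. Unset Printing Implicit Defensive.
Import Order.TTheory GRing.Theory Num.Theory.
Local Open Scope ring_scope.

(* Since the first-choice map is injective, each
   alternative is ranked first by at most one voter, so every plurality score
   is at most 1 and any alternative that is the first choice of some member
   of a district wins that district.  A symmetric districting with k | m has
   no empty district, so we may pick a representative voter r t in each
   district t and let him win it; then r is injective (d (r t) = t), each
   alternative wins at most one district, and x := r t0 is an election winner.

   Let the winner x be indifferent among all m alternatives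
   (value 1/m each) and let every other voter split his unit between his own
   first choice and one fixed alternative j <> x.  Then SW(x) = 1/m and
   SW(j) = 1/m + m/2, so SW(j)/SW(x) = 1 + m^2/2 exactly. *)

Lemma exists_other_ord (n : nat) (x : 'I_n) : (1 < n)%N -> exists j : 'I_n, j != x.
Proof.
move=> n_gt1; have : (0 < #|predC1 x|)%N by rewrite cardC1 card_ord /=; case: n n_gt1 x.
by case/card_gt0P => j; exists j.
Qed.

Section InjectiveFirstChoices.
Variables (n m k : nat) (d : 'I_n -> 'I_k) (top : 'I_n -> 'I_m).
Hypothesis top_inj : injective top.

Lemma plurality_score_le1 (t : 'I_k) (j : 'I_m) : (plurality_score d top t j <= 1)%N.
Proof.
apply/card_le1_eqP => i1 i2; rewrite !inE => /andP [_ /eqP e1] /andP [_ /eqP e2].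
by apply: top_inj; rewrite e1 e2.
Qed.

Lemma member_top_local_winner (i : 'I_n) : plurality_local_winner d top (d i) (top i).
Proof.
move=> j; apply: leq_trans (plurality_score_le1 _ _) _.
by rewrite card_gt0; apply/set0Pn; exists i; rewrite !inE !eqxx.
Qed.

End InjectiveFirstChoices.

Lemma injective_election_winner (m k : nat) (w : 'I_k -> 'I_m) (t : 'I_k) :
  injective w -> election_winner w (w t).
Proof.
move=> w_inj y; apply: (@leq_trans 1).
  apply/card_le1_eqP => t1 t2; rewrite !inE => /eqP e1 /eqP e2.
  by apply: w_inj; rewrite e1 e2.
by rewrite card_gt0; apply/set0Pn; exists t; rewrite !inE.
Qed.

Lemma symmetric_district_reps (n k : nat) (d : 'I_n -> 'I_k) :
  (0 < k)%N -> (k <= n)%N -> symmetric_districting d ->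
  exists r : 'I_k -> 'I_n, forall t, d (r t) = t.
Proof.
move=> k_gt0 k_le_n sym_d.
suff /fin_all_exists [r d_r] : forall t, exists i, d i = t by exists r.
move=> t; have : (0 < #|[set i | d i == t]|)%N by rewrite sym_d divn_gt0.
by case/card_gt0P => i; rewrite inE => /eqP <-; exists i.
Qed.

Section SpreadProfile.
Variables (R : realFieldType) (n : nat).
Hypothesis n_gt0 : (0 < n)%N.

(* Voter x values all n alternatives 1/n; any other voter i gives 1/2 to his
   first choice i and 1/2 to the alternative j (so 1 to j when i = j). *)
Definition spread_profile (x j : 'I_n) : 'I_n -> 'I_n -> R :=
  fun i a => if i == x then n%:R^-1 else ((a == i)%:R + (a == j)%:R) / 2%:R.

Lemma sum_indicator (i : 'I_n) : \sum_(a < n) ((a == i)%:R : R) = 1.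
Proof. by rewrite (bigD1 i) //= eqxx big1 ?addr0 // => a /negbTE ->. Qed.

Lemma spread_profile_unit_sum (x j : 'I_n) : unit_sum_profile (spread_profile x j).
Proof.
split=> [i a | i]; rewrite /spread_profile; case: (i == x).
- by rewrite invr_ge0 ler0n.
- by case: (a == i); case: (a == j) => /=; lra.
- by rewrite sumr_const card_ord -[_ *+ n]mulr_natr mulVf // pnatr_eq0 -lt0n.
- by rewrite -mulr_suml big_split /= !sum_indicator; lra.
Qed.

Lemma spread_profile_consistent (x j : 'I_n) :
  consistent_first (spread_profile x j) id.
Proof.
move=> i a; rewrite /spread_profile /=; case: (i == x) => //.
rewrite eqxx; case: (eqVneq a i) => [-> //|_].
by case: (a == j); case: (i == j) => /=; lra.
Qed.

Variables (x j : 'I_n).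
Hypothesis j_neq_x : j != x.

(* Only voter x gives anything to x. *)
Lemma spread_SW_winner : SW (spread_profile x j) x = n%:R^-1.
Proof.
rewrite /SW (bigD1 x) //= big1 ?addr0; first by rewrite /spread_profile eqxx.
move=> i i_neq_x; rewrite /spread_profile (negbTE i_neq_x) eq_sym (negbTE i_neq_x).
by rewrite eq_sym (negbTE j_neq_x) /=; lra.
Qed.

(* Voter x gives 1/n to j, voter j gives 1, and the n - 2 others give 1/2. *)
Lemma spread_SW_other : SW (spread_profile x j) j = n%:R^-1 + n%:R / 2%:R.
Proof.
rewrite /SW (bigD1 x) //= {1}/spread_profile eqxx; congr (_ + _).
rewrite (eq_bigr (fun i => ((j == i)%:R + 1) / 2%:R)); last first.
  by move=> i i_neq_x; rewrite /spread_profile (negbTE i_neq_x) eqxx.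
have -> : \sum_(i | i != x) ((j == i)%:R + 1) / 2%:R
          = \sum_i ((j == i)%:R + 1) / 2%:R - ((j == x)%:R + 1) / 2%:R :> R.
  by rewrite [in RHS](bigD1 x) //= addrC addrK.
rewrite -mulr_suml big_split /= sumr_const card_ord (negbTE j_neq_x).
under eq_bigr do rewrite eq_sym.
by rewrite sum_indicator /=; lra.
Qed.

Lemma spread_distortion :
  SW (spread_profile x j) j / SW (spread_profile x j) x = 1 + n%:R ^+ 2 / 2%:R.
Proof.
have n_neq0 : (n%:R : R) != 0 by rewrite pnatr_eq0 -lt0n.
by rewrite spread_SW_other spread_SW_winner; field.
Qed.

End SpreadProfile.

(* Voters and alternatives are both 'I_m; voter i's first choice is a_i = i (top = id). *)
Theorem theorem9 (R : realFieldType) (m k : nat) :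
  (2 <= m)%N -> (2 <= k)%N -> (k %| m)%N ->
  forall d : 'I_m -> 'I_k, symmetric_districting d ->
  exists v : 'I_m -> 'I_m -> R,
    [/\ unit_sum_profile v, consistent_first v id &
    exists w : 'I_k -> 'I_m,
      (forall t, plurality_local_winner d id t (w t)) /\
      exists x : 'I_m, election_winner w x /\
        exists j : 'I_m, 1 + (m%:R ^+ 2) / 2%:R <= SW v j / SW v x].
Proof.
move=> m_ge2 k_ge2 k_dvd_m d sym_d.
have k_gt0 : (0 < k)%N by apply: leq_trans k_ge2.
have m_gt0 : (0 < m)%N by apply: leq_trans m_ge2.
have [r d_r] := symmetric_district_reps k_gt0 (dvdn_leq m_gt0 k_dvd_m) sym_d.
have r_inj : injective r by apply: (can_inj d_r).
pose x := r (Ordinal k_gt0).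
have [j j_neq_x] := exists_other_ord x m_ge2.
exists (spread_profile R x j); split.
- exact: spread_profile_unit_sum.
- exact: spread_profile_consistent.
exists r; split.
  by move=> t; rewrite -{1}(d_r t); apply: member_top_local_winner.
exists x; split; first exact: injective_election_winner.
by exists j; rewrite (spread_distortion R m_gt0 j_neq_x).
Qed.
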